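(* Let $X$ be a Hilbert space, $C\subseteq X$ a nonempty subset, $N:C\to S_X$ a mapping, and $r>0$. For $y\in C$ let $B_y$ be the closed ball $B(y-rN(y),r)$, and let $V:=\overline{\operatorname{co}}\big(\bigcup_{y\in C}B_y\big)$ be the closed convex hull of these balls. Then for every $x\in\partial V$ there exists $z_x\in V$ such that the closed ball $B(z_x,r)$ is contained in $V$ and $x\in\partial B(z_x,r)$.
   Context: $S_X$ is the unit sphere of $X$; $B(z,r)$ denotes the closed ball of center $z$ and radius $r$; $\overline{\operatorname{co}}$ denotes the closed convex hull. *)

From Stdlib Require Import Reals.
Open Scope R_scope.
Set Implicit Arguments.

Record InnerProductSpace := {
  carrier :> Type;
  vzero : carrier;
  vadd : carrier -> carrier -> carrier;
  vopp : carrier -> carrier;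
  vscal : R -> carrier -> carrier;
  inner : carrier -> carrier -> R;
  vadd_assoc : forall x y z, vadd x (vadd y z) = vadd (vadd x y) z;
  vadd_comm : forall x y, vadd x y = vadd y x;
  vadd_0l : forall x, vadd vzero x = x;
  vadd_oppr : forall x, vadd x (vopp x) = vzero;
  vscal_assoc : forall a b x, vscal a (vscal b x) = vscal (a * b) x;
  vscal_1 : forall x, vscal 1 x = x;
  vscal_addl : forall a b x, vscal (a + b) x = vadd (vscal a x) (vscal b x);
  vscal_addr : forall a x y, vscal a (vadd x y) = vadd (vscal a x) (vscal a y);
  inner_sym : forall x y, inner x y = inner y x;
  inner_addl : forall x y z, inner (vadd x y) z = inner x z + inner y z;
  inner_scall : forall a x y, inner (vscal a x) y = a * inner x y;
  inner_pos : forall x, 0 <= inner x x;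
  inner_def : forall x, inner x x = 0 -> x = vzero
}.

Section Ops.
Variable X : InnerProductSpace.

Definition vsub (x y : X) : X := vadd X x (vopp X y).
Definition norm (x : X) : R := sqrt (inner X x x).

Definition cauchy (u : nat -> X) : Prop :=
  forall eps, 0 < eps -> exists N, forall m n, (N <= m)%nat -> (N <= n)%nat ->
    norm (vsub (u m) (u n)) < eps.
Definition converges_to (u : nat -> X) (l : X) : Prop :=
  forall eps, 0 < eps -> exists N, forall n, (N <= n)%nat -> norm (vsub (u n) l) < eps.
Definition complete : Prop :=
  forall u, cauchy u -> exists l, converges_to u l.

Definition closed_ball (z : X) (r : R) : X -> Prop := fun y => norm (vsub y z) <= r.
Definition open_ball (z : X) (r : R) : X -> Prop := fun y => norm (vsub y z) < r.
Definition unit_sphere : X -> Prop := fun v => norm v = 1.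

Definition is_open (U : X -> Prop) : Prop :=
  forall x, U x -> exists eps, 0 < eps /\ forall y, open_ball x eps y -> U y.
Definition is_closed (F : X -> Prop) : Prop := is_open (fun x => ~ F x).
Definition boundary (S : X -> Prop) : X -> Prop := fun x =>
  forall eps, 0 < eps ->
    (exists y, open_ball x eps y /\ S y) /\ (exists y, open_ball x eps y /\ ~ S y).

Definition convex (K : X -> Prop) : Prop :=
  forall x y t, K x -> K y -> 0 <= t <= 1 ->
    K (vadd X (vscal X t x) (vscal X (1 - t) y)).
Definition closed_convex_hull (A : X -> Prop) : X -> Prop := fun x =>
  forall K, convex K -> is_closed K -> (forall a, A a -> K a) -> K x.

End Ops.

Record HilbertSpace := {
  hs_space :> InnerProductSpace;
  hs_complete : complete hs_space
}.

Arguments vsub {X} x y.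
Arguments norm {X} x.
Arguments closed_ball {X} z r _.
Arguments open_ball {X} z r _.

From Stdlib Require Import Reals Lra Psatz Classical ClassicalEpsilon.
Open Scope R_scope.

(* Let V be the closed convex hull of the balls B_y = B(y - r N(y), r) and
   W := { z | B(z, r) ⊆ V } the set of admissible centres, which is closed and
   convex because V is, and contains every y - r N(y).  The set
   D := { p | dist(p, W) <= r } is closed and convex and contains every ball B_y,
   hence it contains V.  If x lies on the boundary of V, no ball around x lies in
   V, so every w in W satisfies |x - w| >= r; together with x ∈ V ⊆ D this gives
   dist(x, W) = r.  In a Hilbert space the distance to a nonempty closed convex
   set is attained (a minimizing sequence is Cauchy by the parallelogram law),
   so there is z ∈ W with |x - z| = r: then B(z, r) ⊆ V, z ∈ V, and x lies on the
   sphere ∂B(z, r). *)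

Section InnerProductAlgebra.
Variable X : InnerProductSpace.
Implicit Types x y z u v w : X.

Lemma inner_zero_l y : inner X (vzero X) y = 0.
Proof.
  pose proof (inner_addl X (vzero X) (vzero X) y) as H.
  rewrite (vadd_0l X) in H. lra.
Qed.

Lemma inner_oppl x y : inner X (vopp X x) y = - inner X x y.
Proof.
  pose proof (inner_addl X x (vopp X x) y) as H.
  rewrite (vadd_oppr X), inner_zero_l in H. lra.
Qed.

Lemma inner_addr x y z : inner X x (vadd X y z) = inner X x y + inner X x z.
Proof. rewrite !(inner_sym X x), inner_addl. reflexivity. Qed.

Lemma inner_scalr a x y : inner X x (vscal X a y) = a * inner X x y.
Proof. rewrite !(inner_sym X x), inner_scall. reflexivity. Qed.

Lemma inner_oppr x y : inner X x (vopp X y) = - inner X x y.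
Proof. rewrite !(inner_sym X x), inner_oppl. reflexivity. Qed.

Lemma vsub_eq0 u v : vsub u v = vzero X -> u = v.
Proof.
  unfold vsub; intro H.
  assert (E : vadd X v (vadd X u (vopp X v)) = v)
    by (rewrite H, (vadd_comm X), (vadd_0l X); reflexivity).
  rewrite (vadd_assoc X), (vadd_comm X v u), <- (vadd_assoc X), (vadd_oppr X),
    (vadd_comm X), (vadd_0l X) in E.
  exact E.
Qed.

(* Vectors are determined by their inner products: this turns every vector
   identity into an identity of real numbers, decided by [ring]. *)
Lemma vec_ext u v : (forall w, inner X u w = inner X v w) -> u = v.
Proof.
  intro H. apply vsub_eq0, (inner_def X).
  unfold vsub. rewrite inner_addl, inner_oppl, H. ring.
Qed.

End InnerProductAlgebra.

Ltac vector_eq :=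
  apply vec_ext; let w := fresh "w" in intro w; unfold vsub;
  repeat rewrite ?inner_addl, ?inner_scall, ?inner_oppl, ?inner_zero_l;
  field.

Section Norm.
Variable X : InnerProductSpace.
Implicit Types x y z u v w : X.

Lemma norm_ge0 x : 0 <= norm x.
Proof. apply sqrt_pos. Qed.

Lemma norm_sq x : norm x * norm x = inner X x x.
Proof. apply sqrt_sqrt, inner_pos. Qed.

Lemma cauchy_schwarz_sq x y : inner X x y * inner X x y <= inner X x x * inner X y y.
Proof.
  destruct (Req_dec (inner X y y) 0) as [Hy0 | Hy0].
  - apply (inner_def X) in Hy0. subst y.
    rewrite (inner_sym X x (vzero X)), !inner_zero_l. nra.
  - pose proof (inner_pos X y) as Hy. pose proof (inner_pos X x) as Hx.
    set (t := inner X x y / inner X y y).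
    pose proof (inner_pos X (vadd X x (vscal X (- t) y))) as P.
    rewrite !inner_addl, !inner_addr, !inner_scall, !inner_scalr,
      (inner_sym X y x) in P.
    assert (Et : t * inner X y y = inner X x y) by (unfold t; field; lra).
    nra.
Qed.

Lemma cauchy_schwarz x y : inner X x y <= norm x * norm y.
Proof.
  pose proof (cauchy_schwarz_sq x y). pose proof (norm_sq x). pose proof (norm_sq y).
  pose proof (norm_ge0 x). pose proof (norm_ge0 y).
  assert (0 <= norm x * norm y) by (apply Rmult_le_pos; assumption).
  nra.
Qed.

Lemma norm_triangle x y : norm (vadd X x y) <= norm x + norm y.
Proof.
  pose proof (cauchy_schwarz x y). pose proof (norm_sq x). pose proof (norm_sq y).
  pose proof (norm_sq (vadd X x y)) as Hxy.
  pose proof (norm_ge0 x). pose proof (norm_ge0 y). pose proof (norm_ge0 (vadd X x y)).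
  rewrite inner_addl, !inner_addr, (inner_sym X y x) in Hxy.
  nra.
Qed.

Lemma norm_scal a x : norm (vscal X a x) = Rabs a * norm x.
Proof.
  unfold norm. rewrite inner_scall, inner_scalr, <- Rmult_assoc, sqrt_mult_alt.
  - change (a * a) with (Rsqr a). rewrite sqrt_Rsqr_abs. reflexivity.
  - apply Rle_0_sqr.
Qed.

Lemma dist_self x : norm (vsub x x) = 0.
Proof. unfold vsub, norm. rewrite (vadd_oppr X), inner_zero_l. apply sqrt_0. Qed.

Lemma dist_sym x y : norm (vsub x y) = norm (vsub y x).
Proof.
  replace (vsub x y) with (vscal X (-1) (vsub y x)) by vector_eq.
  rewrite norm_scal, Rabs_left by lra. ring.
Qed.

Lemma dist_triangle x y z : norm (vsub x z) <= norm (vsub x y) + norm (vsub y z).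
Proof.
  replace (vsub x z) with (vadd X (vsub x y) (vsub y z)) by vector_eq.
  apply norm_triangle.
Qed.

Lemma parallelogram x u v :
  let m := vadd X (vscal X (1/2) u) (vscal X (1 - 1/2) v) in
  norm (vsub u v) * norm (vsub u v) + 4 * (norm (vsub x m) * norm (vsub x m)) =
  2 * (norm (vsub x u) * norm (vsub x u)) + 2 * (norm (vsub x v) * norm (vsub x v)).
Proof.
  intro m. rewrite !norm_sq.
  set (p := vsub x u). set (q := vsub x v).
  replace (vsub u v) with (vadd X q (vopp X p)) by (unfold p, q; vector_eq).
  replace (vsub x m) with (vscal X (1/2) (vadd X p q)) by (unfold p, q, m; vector_eq).
  repeat rewrite ?inner_addl, ?inner_addr, ?inner_scall, ?inner_scalr,
    ?inner_oppl, ?inner_oppr.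
  rewrite (inner_sym X q p). field.
Qed.

Lemma midpoint_gap x u v r a b :
  0 <= r -> 0 <= a -> 0 <= b ->
  norm (vsub x u) <= r + a -> norm (vsub x v) <= r + b ->
  r <= norm (vsub x (vadd X (vscal X (1/2) u) (vscal X (1 - 1/2) v))) ->
  norm (vsub u v) * norm (vsub u v) <= 4 * r * a + 2 * a * a + 4 * r * b + 2 * b * b.
Proof.
  intros Hr Ha Hb Hu Hv Hm. pose proof (parallelogram x u v) as P. simpl in P.
  pose proof (norm_ge0 (vsub x u)). pose proof (norm_ge0 (vsub x v)).
  nra.
Qed.

(* A point at distance exactly r from z lies on the boundary of B(z, r):
   x itself is in the ball, and x + t (x - z) is outside for every t > 0. *)
Lemma sphere_boundary z x r :
  0 < r -> norm (vsub x z) = r -> boundary X (closed_ball z r) x.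
Proof.
  intros Hr Hxz eps Heps. split.
  - exists x. unfold open_ball, closed_ball. rewrite dist_self. split; lra.
  - set (t := eps / (2 * r)).
    assert (Ht : 0 < t) by (unfold t; apply Rdiv_lt_0_compat; lra).
    exists (vadd X x (vscal X t (vsub x z))). split.
    + unfold open_ball.
      replace (vsub (vadd X x (vscal X t (vsub x z))) x) with (vscal X t (vsub x z))
        by vector_eq.
      rewrite norm_scal, Hxz, Rabs_pos_eq by lra.
      unfold t. field_simplify; lra.
    + unfold closed_ball.
      replace (vsub (vadd X x (vscal X t (vsub x z))) z) with (vscal X (1 + t) (vsub x z))
        by vector_eq.
      rewrite norm_scal, Hxz, Rabs_pos_eq by lra. nra.
Qed.

End Norm.

Section ClosedConvexHull.
Variable X : InnerProductSpace.
Implicit Types (A F K : X -> Prop) (x : X).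

Lemma cch_sub A x : A x -> closed_convex_hull X A x.
Proof. intros Ha K _ _ HK. auto. Qed.

Lemma cch_convex A : convex X (closed_convex_hull X A).
Proof. intros x y t Hx Hy Ht K Kc Kcl HK. apply Kc; [apply Hx | apply Hy |]; auto. Qed.

Lemma cch_closed A : is_closed X (closed_convex_hull X A).
Proof.
  intros x Hx.
  apply not_all_ex_not in Hx as [K HK].
  apply imply_to_and in HK as [Kc HK].
  apply imply_to_and in HK as [Kcl HK].
  apply imply_to_and in HK as [HA HKx].
  destruct (Kcl x HKx) as [eps [Heps Hball]].
  exists eps. split; [exact Heps |].
  intros y Hy Hcy. apply (Hball y Hy), Hcy; assumption.
Qed.

Lemma cch_least A K : convex X K -> is_closed X K -> (forall a, A a -> K a) ->
  forall x, closed_convex_hull X A x -> K x.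
Proof. intros Kc Kcl HA x Hx. exact (Hx K Kc Kcl HA). Qed.

Lemma closed_boundary_mem F x : is_closed X F -> boundary X F x -> F x.
Proof.
  intros Hc Hb. apply NNPP. intro Hn. destruct (Hc x Hn) as [eps [He Hball]].
  destruct (Hb eps He) as [[y [Hy1 Hy2]] _]. exact (Hball y Hy1 Hy2).
Qed.

Lemma closed_limit F (u : nat -> X) l :
  is_closed X F -> (forall n, F (u n)) -> converges_to X u l -> F l.
Proof.
  intros Hc Hu Hl. apply NNPP. intro Hn. destruct (Hc l Hn) as [eps [He Hball]].
  destruct (Hl eps He) as [n Hn']. apply (Hball (u n)); [| apply Hu].
  apply Hn'. constructor.
Qed.

End ClosedConvexHull.

Section InnerAndOuterParallelSets.
Variable X : InnerProductSpace.
Variable r : R.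

Definition admissible_centres (V : X -> Prop) (z : X) : Prop :=
  forall p, closed_ball z r p -> V p.

Definition near (W : X -> Prop) (p : X) : Prop :=
  forall eps, 0 < eps -> exists w, W w /\ norm (vsub p w) < r + eps.

Lemma admissible_centres_closed V :
  is_closed X V -> is_closed X (admissible_centres V).
Proof.
  intros HV z Hz.
  apply not_all_ex_not in Hz as [p Hp].
  apply imply_to_and in Hp as [Hp HVp].
  destruct (HV p HVp) as [eps [He Hball]].
  exists eps. split; [exact He |].
  intros z' Hz' HW.
  apply (Hball (vadd X p (vsub z' z))).
  - unfold open_ball.
    replace (vsub (vadd X p (vsub z' z)) p) with (vsub z' z) by vector_eq. exact Hz'.
  - apply HW. unfold closed_ball.
    replace (vsub (vadd X p (vsub z' z)) z') with (vsub p z) by vector_eq. exact Hp.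
Qed.

(* A point p of B(t z1 + (1-t) z2, r) is the same convex combination of the
   translates z1 + d and z2 + d, d := p - (t z1 + (1-t) z2). *)
Lemma admissible_centres_convex V :
  convex X V -> convex X (admissible_centres V).
Proof.
  intros HV z1 z2 t H1 H2 Ht p Hp. unfold closed_ball in Hp.
  set (z := vadd X (vscal X t z1) (vscal X (1 - t) z2)) in *.
  set (d := vsub p z).
  replace p with (vadd X (vscal X t (vadd X z1 d)) (vscal X (1 - t) (vadd X z2 d)))
    by (unfold d, z; vector_eq).
  apply HV; [apply H1 | apply H2 | exact Ht]; unfold closed_ball.
  - replace (vsub (vadd X z1 d) z1) with d by vector_eq. exact Hp.
  - replace (vsub (vadd X z2 d) z2) with d by vector_eq. exact Hp.
Qed.

Lemma near_convex W : convex X W -> convex X (near W).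
Proof.
  intros HW p1 p2 t H1 H2 Ht eps He.
  destruct (H1 eps He) as [w1 [Hw1 N1]]. destruct (H2 eps He) as [w2 [Hw2 N2]].
  exists (vadd X (vscal X t w1) (vscal X (1 - t) w2)). split; [apply HW; auto |].
  replace (vsub (vadd X (vscal X t p1) (vscal X (1 - t) p2))
                (vadd X (vscal X t w1) (vscal X (1 - t) w2)))
    with (vadd X (vscal X t (vsub p1 w1)) (vscal X (1 - t) (vsub p2 w2))) by vector_eq.
  eapply Rle_lt_trans; [apply norm_triangle |].
  rewrite !norm_scal, (Rabs_pos_eq t), (Rabs_pos_eq (1 - t)) by lra.
  destruct (Req_dec t 0) as [-> | Ht0]; [lra |].
  assert (t * norm (vsub p1 w1) < t * (r + eps)) by (apply Rmult_lt_compat_l; lra).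
  assert ((1 - t) * norm (vsub p2 w2) <= (1 - t) * (r + eps))
    by (apply Rmult_le_compat_l; lra).
  lra.
Qed.

Lemma near_closed W : is_closed X (near W).
Proof.
  intros p Hp.
  apply not_all_ex_not in Hp as [eps Hp].
  apply imply_to_and in Hp as [He Hp].
  exists (eps / 2). split; [lra |].
  intros p' Hp' Hnear. destruct (Hnear (eps / 2)) as [w [Hw Hpw]]; [lra |].
  apply Hp. exists w. split; [exact Hw |].
  pose proof (dist_triangle X p p' w). unfold open_ball in Hp'.
  rewrite dist_sym in Hp'. lra.
Qed.

End InnerAndOuterParallelSets.

Lemma inv_succ_le (n M : nat) : (M <= n)%nat -> (0 < M)%nat -> / INR (S n) <= / INR M.
Proof.
  intros HMn HM. apply Rinv_le_contravar; [apply lt_0_INR; exact HM |].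
  apply le_INR. lia.
Qed.

Lemma inv_succ_pos (n : nat) : 0 < / INR (S n).
Proof. apply Rinv_0_lt_compat, lt_0_INR. lia. Qed.

Section DistanceAttained.
Variable X : HilbertSpace.
Variables (W : X -> Prop) (x : X) (r : R).
Hypothesis Hr : 0 < r.
Hypothesis W_convex : convex X W.
Hypothesis far : forall w, W w -> r <= norm (vsub x w).

Lemma minimizing_cauchy (ws : nat -> X) :
  (forall n, W (ws n) /\ norm (vsub x (ws n)) < r + / INR (S n)) -> cauchy X ws.
Proof.
  intros Hws eps He.
  set (d := Rmin 1 ((eps / 2) * (eps / 2) / (8 * r + 4))).
  assert (Hd : 0 < d) by (apply Rmin_pos; [lra | apply Rdiv_lt_0_compat; nra]).
  assert (Hd1 : d <= 1) by apply Rmin_l.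
  assert (Hd2 : (8 * r + 4) * d <= (eps / 2) * (eps / 2)).
  { assert (d <= (eps / 2) * (eps / 2) / (8 * r + 4)) as Hdr by apply Rmin_r.
    apply Rmult_le_compat_l with (r := 8 * r + 4) in Hdr; [| lra].
    replace ((8 * r + 4) * ((eps / 2) * (eps / 2) / (8 * r + 4)))
      with ((eps / 2) * (eps / 2)) in Hdr by (field; lra).
    exact Hdr. }
  destruct (archimed_cor1 d Hd) as [M [HM HM0]].
  exists M. intros m n Hm Hn.
  destruct (Hws m) as [Wm Nm]. destruct (Hws n) as [Wn Nn].
  pose proof (inv_succ_le m M Hm HM0). pose proof (inv_succ_le n M Hn HM0).
  pose proof (inv_succ_pos m). pose proof (inv_succ_pos n).
  assert (Hmid : r <= norm (vsub x (vadd X (vscal X (1/2) (ws m)) (vscal X (1 - 1/2) (ws n)))))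
    by (apply far, W_convex; [exact Wm | exact Wn | lra]).
  pose proof (midpoint_gap X x (ws m) (ws n) r (/ INR (S m)) (/ INR (S n))
    ltac:(lra) ltac:(lra) ltac:(lra) ltac:(lra) ltac:(lra) Hmid) as Hgap.
  pose proof (norm_ge0 X (vsub (ws m) (ws n))).
  set (em := / INR (S m)) in *. set (en := / INR (S n)) in *.
  assert (4 * r * em + 2 * em * em + 4 * r * en + 2 * en * en <= (8 * r + 4) * d) by nra.
  nra.
Qed.

Lemma distance_attained :
  is_closed X W -> near X r W x -> exists z, W z /\ norm (vsub x z) = r.
Proof.
  intros W_closed Hnear.
  assert (Hseq : forall n : nat, exists w, W w /\ norm (vsub x w) < r + / INR (S n))
    by (intro n; apply Hnear, inv_succ_pos).
  destruct (choice _ Hseq) as [ws Hws].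
  destruct (hs_complete X (minimizing_cauchy ws Hws)) as [z Hz].
  assert (Wz : W z) by (apply (closed_limit X W ws); [exact W_closed | apply Hws | exact Hz]).
  exists z. split; [exact Wz |].
  apply Rle_antisym; [| apply far, Wz].
  apply Rnot_lt_le. intro Hgt.
  set (e := norm (vsub x z) - r).
  assert (He : 0 < e / 2) by (unfold e; lra).
  destruct (Hz (e / 2) He) as [N1 HN1].
  destruct (archimed_cor1 (e / 2) He) as [N2 [HN2 HN20]].
  pose proof (HN1 (N1 + N2)%nat ltac:(lia)).
  pose proof (inv_succ_le (N1 + N2) N2 ltac:(lia) HN20).
  destruct (Hws (N1 + N2)%nat) as [_ Hn].
  pose proof (dist_triangle X x (ws (N1 + N2)%nat) z).
  unfold e in *. lra.
Qed.

End DistanceAttained.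

(* Every point of W is at distance at least r from a boundary point x of V:
   otherwise a small ball around x lies in some B(w, r) ⊆ V. *)
Lemma boundary_far_from_centres (X : InnerProductSpace) (V : X -> Prop) r x w :
  boundary X V x -> admissible_centres X r V w -> r <= norm (vsub x w).
Proof.
  intros Hx Hw. apply Rnot_lt_le. intro Hlt.
  destruct (Hx (r - norm (vsub x w))) as [_ [y [Hy HVy]]]; [lra |].
  apply HVy, Hw. unfold closed_ball. unfold open_ball in Hy.
  pose proof (dist_triangle X y x w). lra.
Qed.

Theorem claim4p1 (X : HilbertSpace) (C : X -> Prop) (N : X -> X) (r : R)
  (hC : exists c, C c)
  (hN : forall y, C y -> unit_sphere X (N y))
  (hr : 0 < r) :
  let B := fun y : X => closed_ball (vsub y (vscal X r (N y))) r in
  let V := closed_convex_hull X (fun p => exists y, C y /\ B y p) in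
  forall x, boundary X V x ->
    exists z, V z /\ (forall p, closed_ball z r p -> V p) /\
              boundary X (closed_ball z r) x.
Proof.
  intros B V x Hx.
  set (W := admissible_centres X r V).
  assert (V_closed : is_closed X V) by apply cch_closed.
  assert (V_convex : convex X V) by apply cch_convex.
  assert (centres_in_W : forall y, C y -> W (vsub y (vscal X r (N y))))
    by (intros y Hy p Hp; apply cch_sub; exists y; split; assumption).
  assert (V_near_W : forall p, V p -> near X r W p).
  { apply cch_least; [apply near_convex, admissible_centres_convex | apply near_closed |];
      [exact V_convex |].
    intros a [y [Hy Ha]] eps He.
    exists (vsub y (vscal X r (N y))). split; [apply centres_in_W, Hy |].
    unfold B, closed_ball in Ha. lra. }
  destruct (distance_attained X W x r hr (admissible_centres_convex X r V V_convex)
              (fun w => boundary_far_from_centres X V r x w Hx)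
              (admissible_centres_closed X r V V_closed)
              (V_near_W x (closed_boundary_mem X V x V_closed Hx)))
    as [z [Wz Hxz]].
  exists z. split; [| split].
  - apply Wz. unfold closed_ball. rewrite dist_self. lra.
  - exact Wz.
  - apply sphere_boundary; assumption.
Qed.
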